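(* Let $G$ be a finite graph with ordered edges and let $H^i(G)$ be the cohomology of its chain complex $\mathcal{C}(G)$ (defined in the context). Then $$\sum_{i\ge 0}(-1)^i\, q\dim H^i(G) \;=\; P_G(1+q),$$ where $P_G(\lambda)$ is the chromatic polynomial of $G$.
   Context: Graphs are finite; loops and multiple edges are allowed. $P_G(\lambda)$ is the chromatic polynomial: for a positive integer $\lambda$, $P_G(\lambda)$ is the number of assignments of colors $\{1,\dots,\lambda\}$ to vertices such that the endpoints of every edge receive different colors (equivalently $P_G(\lambda)=\sum_{s\subseteq E}(-1)^{|s|}\lambda^{k(s)}$, $k(s)$ the number of components of $[G:s]$). For a graded $\mathbb{Z}$-module $\mathcal{M}=\bigoplus_j M_j$, $q\dim\mathcal{M}=\sum_j q^j\operatorname{rank}(M_j)$ with $\operatorname{rank}(M_j)=\dim_{\mathbb{Q}}(M_j\otimes\mathbb{Q})$. For $G=(V,E)$ and $s\subseteq E$, $[G:s]$ is the spanning subgraph with edge set $s$. With $1*1=1$, $1*x=x*1=x$, $x*x=0$: an enhanced state is $S=(s,c)$, $s\subseteq E$, $c$ assigning $1$ or $x$ to each component of $[G:s]$; $i(S)=|s|$, $j(S)=$ number of components colored $x$. $C^{i,j}(G)$ is free abelian on enhanced states with $i(S)=i,j(S)=j$; $C^i(G)=\bigoplus_jC^{i,j}(G)$ graded by $j$. For an ordering of the edges, $d(S)=\sum_{e\in E\setminus s}(-1)^{n(e)}S_e$, $n(e)$ the number of edges of $s$ before $e$; $S_e=(s\cup\{e\},c_e)$ where, if $e$ joins a component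 to itself, colors are unchanged, and if $e$ joins distinct components $E_1,E_2$ the merged component gets $c(E_1)*c(E_2)$ (and $S_e=0$ if this product is $0$). $H^{i,j}(G)$ is the cohomology of $(C^{\bullet,j}(G),d)$ and $H^i(G)=\bigoplus_j H^{i,j}(G)$, graded by $j$. *)

From HB Require Import structures.
From mathcomp Require Import all_boot all_order all_algebra.
Set Implicit Arguments. Unset Strict Implicit. Unset Printing Implicit Defensive.
Import GRing.Theory Num.Theory.
Local Open Scope ring_scope.

(* A finite graph (loops and multiple edges allowed): a finite vertex type V,
   m edges indexed by 'I_m (this index order is the edge ordering), and
   ends e = the pair of endpoints of edge e. *)
Section Chromatic.
Variables (V : finType) (m : nat) (ends : 'I_m -> V * V).

Definition adj (s : {set 'I_m}) : rel V := fun x y =>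
  [exists e in s, (((ends e).1 == x) && ((ends e).2 == y))
               || (((ends e).1 == y) && ((ends e).2 == x))].

Definition comp (s : {set 'I_m}) (v : V) : {set V} := [set w | connect (adj s) v w].
Definition comps (s : {set 'I_m}) : {set {set V}} := comp s @: setT.
Definition ncomp (s : {set 'I_m}) : nat := #|comps s|.

Definition chrom_poly : {poly int} :=
  \sum_(s : {set 'I_m}) ((-1) ^+ #|s|) *: 'X^(ncomp s).

(* An enhanced state (s, c) is encoded as (s, K) where K is the set of
   components of [G:s] colored x (the others are colored 1). *)
Definition estate := ({set 'I_m} * {set {set V}})%type.
Definition valid (S : estate) : bool := S.2 \subset comps S.1.
Definition deg_i (S : estate) : nat := #|S.1|.
Definition deg_j (S : estate) : nat := #|S.2|.

Definition sign_e (s : {set 'I_m}) (e : 'I_m) : int :=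
  (-1) ^+ #|[set f in s | (val f < val e)%N]|.

(* S_e ; None stands for S_e = 0 *)
Definition Se (S : estate) (e : 'I_m) : option estate :=
  let s := S.1 in let K := S.2 in
  let u := (ends e).1 in let v := (ends e).2 in
  let s' := e |: s in
  if connect (adj s) u v then Some (s', K)
  else match comp s u \in K, comp s v \in K with
       | false, false => Some (s', K)                 (* 1 * 1 = 1 *)
       | true, true => None                           (* x * x = 0 *)
       | _, _ => Some (s', (K :\ comp s u :\ comp s v) :|: [set comp s' u])
                                                      (* 1 * x = x * 1 = x *)
       end.

(* enumeration of all (possibly invalid) pairs, used as matrix indices *)
Definition NS : nat := #|{: estate}|.
Definition st (a : 'I_NS) : estate := enum_val a.

(* the differential d over Z, as a matrix acting on row vectors:
   row S is d(S) in the basis of enhanced states (zero row for non-states) *)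
Definition dmx : 'M[int]_NS := \matrix_(a, b)
  if valid (st a) then
    \sum_(e : 'I_m | e \notin (st a).1)
       (if Se (st a) e == Some (st b) then sign_e (st a).1 e else 0)
  else 0.

Definition dQ : 'M[rat]_NS := map_mx (fun z : int => (z%:~R : rat)) dmx.

(* the subspace C^{i,j}(G) (x) Q, as the row space of a diagonal projector *)
Definition proj (i j : nat) : 'M[rat]_NS :=
  diag_mx (\row_a (if valid (st a) && (deg_i (st a) == i) && (deg_j (st a) == j)
                   then 1 else 0)).

Definition cocycles (i j : nat) : 'M[rat]_NS := (proj i j :&: kermx dQ)%MS.
Definition coboundaries (i j : nat) : 'M[rat]_NS :=
  if i is i'.+1 then (proj i' j *m dQ)%R else 0.

(* rank H^{i,j}(G) = dim_Q (H^{i,j}(G) (x) Q) = dim_Q of the cohomology of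
   the rationalized complex (Q is flat over Z); a complement of the
   coboundaries inside the cocycles has the dimension of the quotient. *)
Definition cohom_rank (i j : nat) : nat :=
  \rank (cocycles i j :\: coboundaries i j)%MS.

(* q dim H^i(G); j ranges over 0..|V| (j(S) <= number of components <= |V|) *)
Definition qdimH (i : nat) : {poly int} :=
  \sum_(j < #|V|.+1) (cohom_rank i j)%:R *: 'X^j.

End Chromatic.

(* For s ⊆ t, coarsening (s, K) to t colours x exactly the components
   of [G:t] that contain a member of K, and gives 0 when two members of K fall
   into one component of [G:t] (x * x = 0).  S_e is the coarsening of S to
   s ∪ {e}, and coarsenings compose, so S_ef = S_fe; as the two orders carry
   opposite signs, d ∘ d = 0.  Since d raises i by one and preserves j,
   rank–nullity over Q turns the alternating sum of the ranks of H^{i,j} into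
   the signed count of the states of degree j.  Summing over j gives
   Σ_S (-1)^{|s|} q^{j(S)} = Σ_s (-1)^{|s|} (1 + q)^{k(s)} = P_G(1 + q). *)

From Pilot Require Import Defs.
From HB Require Import structures.
From mathcomp Require Import all_boot all_order all_algebra.
Set Implicit Arguments. Unset Strict Implicit. Unset Printing Implicit Defensive.
Import GRing.Theory Num.Theory.
Local Open Scope ring_scope.

Lemma sum_antisym (R : numDomainType) (I : finType) (F : I -> I -> R) :
  (forall i j, F j i = - F i j) -> \sum_i \sum_j F i j = 0.
Proof.
move=> Fanti; set X := \sum_i _.
have : X = - X.
  rewrite {1}/X exchange_big -sumrN; apply: eq_bigr => i _.
  by rewrite -sumrN; apply: eq_bigr => j _; rewrite Fanti.
by move/eqP; rewrite -addr_eq0 -mulr2n mulrn_eq0 => /eqP.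
Qed.

Lemma rank_diag_mx (F : fieldType) n (d : 'rV[F]_n) :
  \rank (diag_mx d) = #|[pred i | d 0 i != 0]|.
Proof.
rewrite -sum1_card big_mkcond /=.
elim: n d => [|n IH] d; first by rewrite big_ord0; apply/eqP; rewrite -leqn0 rank_leq_row.
rewrite -[in LHS](hsubmxK (d : 'rV_(1 + n))).
set l := lsubmx (d : 'rV_(1 + n)); set r := rsubmx (d : 'rV_(1 + n)).
rewrite (diag_mx_row l r) (rank_diag_block_mx (diag_mx l) (diag_mx r)) IH big_ord_recl.
have l00 : l 0 0 = d 0 ord0 by rewrite mxE; congr (d 0 _); apply: val_inj.
congr addn; last first.
  apply: eq_bigr => i _; rewrite !inE mxE.
  by congr (if d 0 _ != 0 then _ else _); apply: val_inj.
rewrite rank_rV; have -> : (diag_mx l == 0) = (l 0 0 == 0).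
  apply/eqP/eqP => [/matrixP/(_ 0 0)|l0]; first by rewrite !mxE eqxx mulr1n.
  by apply/matrixP => i j; rewrite !ord1 [LHS]mxE l0 mul0rn mxE.
by rewrite inE -l00; case: (l 0 0 == 0).
Qed.

Lemma expr1D_subsets (R : comPzSemiRingType) (T : finType) (x : R) (A : {set T}) :
  (1 + x) ^+ #|A| = \sum_(B : {set T} | B \subset A) x ^+ #|B|.
Proof.
have := @bigA_distr R 0 1 *%R +%R T (fun i => if i \in A then x else 0) (fun=> 1).
have -> : \prod_i ((if i \in A then x else 0) + 1) = \prod_(i in A) (x + 1).
  by rewrite [RHS]big_mkcond; apply: eq_bigr => i _; case: ifP => _; rewrite ?add0r.
rewrite prodr_const addrC => ->; rewrite [RHS]big_mkcond; apply: eq_bigr => B _.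
case: ifP => BA.
  rewrite (bigID (mem B)) /= (eq_bigr (fun=> x)) => [|i iB]; last first.
    by rewrite iB (subsetP BA).
  by rewrite prodr_const big1 ?mulr1 // => i /negbTE ->.
have [i /andP[iB iA]] : exists i, (i \in B) && (i \notin A).
  by apply/existsP; apply: contraFT BA => /existsPn nBA; apply/subsetP => i iB;
     move: (nBA i); rewrite iB negbK.
by rewrite (bigD1 i) //= iB (negbTE iA) mul0r.
Qed.

Section EulerCharacteristic.
Variables (F : fieldType) (n top : nat) (D : 'M[F]_n) (C : nat -> 'M[F]_n).
Hypotheses (D2 : D *m D = 0) (CD : forall i, (C i *m D <= C i.+1)%MS).
Hypothesis C_top : C top *m D = 0.

Definition cocycle_mx i := (C i :&: kermx D)%MS.
Definition coboundary_mx i := if i is i'.+1 then C i' *m D else 0.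

Lemma coboundary_sub_cocycle i : (coboundary_mx i <= cocycle_mx i)%MS.
Proof.
case: i => [|i] /=; first exact: sub0mx.
by rewrite /cocycle_mx sub_capmx CD /= sub_kermx -mulmxA D2 mulmx0.
Qed.

Lemma rank_cohomology i :
  (\rank (cocycle_mx i :\: coboundary_mx i) + \rank (coboundary_mx i.+1)
     + \rank (coboundary_mx i) = \rank (C i))%N.
Proof.
rewrite -(mxrank_mul_ker (C i) D) -/(cocycle_mx i).
have := mxrank_cap_compl (cocycle_mx i) (coboundary_mx i).
rewrite (capmx_idPr (coboundary_sub_cocycle i)) => <-.
by rewrite addnC addnA [in RHS]addnC.
Qed.

Lemma euler_characteristic :
  \sum_(i < top.+1) (-1) ^+ i * (\rank (cocycle_mx i :\: coboundary_mx i))%:R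
  = \sum_(i < top.+1) (-1) ^+ i * (\rank (C i))%:R :> int.
Proof.
pose b i : int := (\rank (coboundary_mx i))%:R.
have tele : \sum_(i < top.+1) (-1) ^+ i * (b i.+1 + b i) = 0.
  have := @telescope_sumr _ 0 top.+1 (fun i => (-1) ^+ i * b i) (leq0n _).
  rewrite big_mkord /b /= C_top !mxrank0 !mulr0 subrr => /eqP.
  rewrite -oppr_eq0 -sumrN => /eqP; apply: eq_trans; apply: eq_bigr => i _.
  by rewrite exprS mulN1r mulNr opprB opprK mulrDr addrC.
transitivity (\sum_(i < top.+1) (-1) ^+ i * (\rank (C i))%:R
  - \sum_(i < top.+1) (-1) ^+ i * (b i.+1 + b i)); last by rewrite tele subr0.
rewrite -sumrB; apply: eq_bigr => i _.
by rewrite /b -mulrBr -(rank_cohomology i) !natrD -[X in X - _]addrA addrK.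
Qed.

End EulerCharacteristic.

Lemma diag_mul_submx (F : fieldType) n (D : 'M[F]_n) (p q : pred 'I_n) :
    (forall a b, p a -> D a b != 0 -> q b) ->
  (diag_mx (\row_a (if p a then 1 else 0)) *m D
     <= diag_mx (\row_a (if q a then 1 else 0)))%MS.
Proof.
move=> pDq; set P := diag_mx _; set Q := diag_mx _.
suff -> : P *m D = P *m D *m Q by apply: submxMl.
apply/matrixP => a b; rewrite mul_mx_diag mul_diag_mx !mxE.
case: ifP => pa; last by rewrite !mul0r.
by have [->|/(pDq a b pa) ->] := eqVneq (D a b) 0; rewrite ?mulr0 ?mul0r ?mulr1.
Qed.

Lemma sum_card_bigraded (R : nmodType) (T : finType) (P : pred T) (di dj : T -> nat)
    (M N : nat) (F : nat -> nat -> R) :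
    (forall x, P x -> di x < M)%N -> (forall x, P x -> dj x < N)%N ->
  \sum_(i < M) \sum_(j < N) F i j *+ #|[pred x | P x && (di x == i) && (dj x == j)]|
  = \sum_(x | P x) F (di x) (dj x).
Proof.
move=> ltM ltN; rewrite pair_big /=.
transitivity (\sum_(p : 'I_M * 'I_N) \sum_(x | P x)
                (if (di x == p.1) && (dj x == p.2) then F p.1 p.2 else 0)).
  by apply: eq_bigr => -[i j] _ /=; rewrite -big_mkcondr -sumr_const;
     apply: eq_bigl => x; rewrite inE andbA.
rewrite exchange_big; apply: eq_bigr => x Px.
rewrite (bigD1 (Ordinal (ltM x Px), Ordinal (ltN x Px))) ?eqxx //= big1 ?addr0 //.
move=> -[i j] /= ne.
case: ifP => // /andP[/eqP di_i /eqP dj_j]; case/negP: ne; apply/eqP.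
by congr pair; apply: val_inj.
Qed.

Section Components.
Variables (V : finType) (m : nat) (ends : 'I_m -> V * V).
Local Notation adj := (adj ends).
Local Notation comp := (Defs.comp ends).
Local Notation comps := (comps ends).

Lemma adj_sym s : symmetric (adj s).
Proof. by move=> x y; apply/existsP/existsP=> -[e He]; exists e; rewrite orbC. Qed.

Lemma connect_sym_adj s : connect_sym (adj s).
Proof. exact/sym_connect_sym/adj_sym. Qed.

Lemma mem_comp s v w : (w \in comp s v) = connect (adj s) v w.
Proof. by rewrite inE. Qed.

Lemma comp_eqE s v w : (comp s v == comp s w) = connect (adj s) v w.
Proof.
apply/eqP/idP => [Evw|Cvw]; last first.
  by apply/setP=> x; rewrite !mem_comp (same_connect (connect_sym_adj s) Cvw).
by rewrite connect_sym_adj -mem_comp -Evw mem_comp connect0.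
Qed.

Lemma comp_mem s v w : w \in comp s v -> comp s v = comp s w.
Proof. by rewrite mem_comp -comp_eqE => /eqP. Qed.

Lemma compsP s C : reflect (exists v, C = comp s v) (C \in comps s).
Proof. by apply: (iffP imsetP) => [[v _ ->]|[v ->]]; exists v. Qed.

Lemma comp_in_comps s v : comp s v \in comps s.
Proof. by apply/compsP; exists v. Qed.

Lemma comp_of_sub_comps s (K : {set {set V}}) D :
  K \subset comps s -> D \in K -> exists a, D = comp s a.
Proof. by move=> /subsetP sK /sK /compsP. Qed.

Lemma connect_adj_sub (s t : {set 'I_m}) :
  s \subset t -> subrel (connect (adj s)) (connect (adj t)).
Proof.
move=> st; apply: connect_sub => x y /existsP[e /andP[es Exy]]; apply: connect1.
by apply/existsP; exists e; rewrite (subsetP st e es).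
Qed.

Lemma comp_subset (s t : {set 'I_m}) a b : s \subset t ->
  (comp s a \subset comp t b) = connect (adj t) b a.
Proof.
move=> st; apply/subsetP/idP => [sub|Cba x].
  by have := sub a; rewrite !mem_comp connect0 => /(_ isT).
by rewrite !mem_comp => /(connect_adj_sub st); apply: connect_trans.
Qed.

Lemma comp_sub_widen (s t : {set 'I_m}) a : s \subset t -> comp s a \subset comp t a.
Proof. by move=> st; rewrite comp_subset ?connect0. Qed.

Section AddEdge.
Variables (s : {set 'I_m}) (e : 'I_m).
Let u := (ends e).1.
Let v := (ends e).2.

Definition reaches_ends x := connect (adj s) x u || connect (adj s) x v.

Lemma reaches_endsE x :
  reaches_ends x = (comp s x == comp s u) || (comp s x == comp s v).
Proof. by rewrite !comp_eqE. Qed.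

Lemma reaches_ends_connect x y :
  connect (adj s) x y -> reaches_ends x = reaches_ends y.
Proof. by rewrite !reaches_endsE -comp_eqE => /eqP ->. Qed.

Lemma reaches_u : reaches_ends u. Proof. by rewrite /reaches_ends connect0. Qed.
Lemma reaches_v : reaches_ends v. Proof. by rewrite /reaches_ends connect0 orbT. Qed.

Lemma connect_setU1 x y : connect (adj (e |: s)) x y =
  connect (adj s) x y || (reaches_ends x && reaches_ends y).
Proof.
have ss' : s \subset e |: s by apply: subsetUr.
have to_u z : reaches_ends z -> connect (adj (e |: s)) z u.
  have Euv : connect (adj (e |: s)) v u.
    by apply: connect1; apply/existsP; exists e; rewrite setU11 !eqxx orbT.
  case/orP => /(connect_adj_sub ss') // Czv; exact: connect_trans Czv Euv.
apply/idP/idP; last first.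
  case/orP => [/(connect_adj_sub ss') //|/andP[/to_u Cxu /to_u Cyu]].
  by apply: connect_trans Cxu _; rewrite connect_sym_adj.
case/connectP => p; elim: p x => [|z p IH] x /=; first by move=> _ ->; rewrite connect0.
case/andP => /existsP[f /andP[fs Exz]] /IH {}IH /IH {IH}.
have: connect (adj s) x z || (reaches_ends x && reaches_ends z).
  move: fs; rewrite in_setU1 => /orP[/eqP Dfe|fs]; last first.
    by rewrite connect1 //; apply/existsP; exists f; rewrite fs.
  rewrite Dfe /reaches_ends -/u -/v in Exz *; case/orP: Exz => /andP[/eqP <- /eqP <-];
    by rewrite !connect0 ?orbT.
case/orP => [Cxz|/andP[rx rz]] /orP[Czy|/andP[rz' ry]].
- by rewrite (connect_trans Cxz Czy).
- by rewrite (reaches_ends_connect Cxz) rz' ry orbT.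
- by rewrite -(reaches_ends_connect Czy) rz rx orbT.
- by rewrite rx ry orbT.
Qed.

Lemma comp_setU1 x : comp (e |: s) x =
  if reaches_ends x then comp s u :|: comp s v else comp s x.
Proof.
apply/setP => y; rewrite mem_comp connect_setU1; case: ifP => rx /=; last first.
  by rewrite orbF mem_comp.
rewrite in_setU !mem_comp /reaches_ends !(connect_sym_adj s y).
case: (boolP (connect (adj s) x y)) => [Cxy|_] //=.
by move: rx; rewrite (reaches_ends_connect Cxy) /reaches_ends !(connect_sym_adj s y).
Qed.

End AddEdge.

Definition collides (K : {set {set V}}) (t : {set 'I_m}) : bool :=
  [exists C in comps t, exists D1 in K, exists D2 in K,
     [&& D1 != D2, D1 \subset C & D2 \subset C]].

Lemma collidesP (K : {set {set V}}) (t : {set 'I_m}) : reflect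
  (exists C D1 D2, [/\ C \in comps t, D1 \in K, D2 \in K, D1 != D2
                    & (D1 \subset C) && (D2 \subset C)])
  (collides K t).
Proof.
apply: (iffP idP).
  case/exists_inP => C HC /exists_inP[D1 H1 /exists_inP[D2 H2 /and3P[N S1 S2]]].
  by exists C, D1, D2; rewrite S1 S2.
case=> C [D1 [D2 [HC H1 H2 N /andP[S1 S2]]]].
by apply/exists_inP; exists C => //; apply/exists_inP; exists D1 => //;
   apply/exists_inP; exists D2 => //; rewrite N S1 S2.
Qed.

Definition coarsen_comps (K : {set {set V}}) (t : {set 'I_m}) : {set {set V}} :=
  [set C in comps t | [exists D in K, D \subset C]].

Definition coarsen (S : estate V m) (t : {set 'I_m}) : option (estate V m) :=
  if collides S.2 t then None else Some (t, coarsen_comps S.2 t).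

Lemma coarsen_compsP (K : {set {set V}}) (t : {set 'I_m}) (Y : {set V}) : reflect
  (Y \in comps t /\ exists2 D, D \in K & D \subset Y) (Y \in coarsen_comps K t).
Proof.
rewrite inE; apply: (iffP andP) => [[Yt /exists_inP[D DK DY]]|[Yt [D DK DY]]].
  by split => //; exists D.
by split => //; apply/exists_inP; exists D.
Qed.

Lemma coarsen_comps_sub (K : {set {set V}}) (t : {set 'I_m}) :
  coarsen_comps K t \subset comps t.
Proof. by apply/subsetP => Y /coarsen_compsP[]. Qed.

Section CoarsenAddEdge.
Variables (s : {set 'I_m}) (e : 'I_m) (K : {set {set V}}).
Hypothesis K_comps : K \subset comps s.
Let u := (ends e).1.
Let v := (ends e).2.
Let cu := comp s u.
Let cv := comp s v.
Let s' := e |: s.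
Let ss' : s \subset s'. Proof. exact: subsetUr. Qed.

Lemma mem_coarsen_setU1 Y : (Y \in coarsen_comps K s') =
  ((Y == comp s' u) && ((cu \in K) || (cv \in K))) || [&& Y \in K, Y != cu & Y != cv].
Proof.
apply/coarsen_compsP/idP.
  case=> /compsP[x ->] [D DK].
  have [a Da] := comp_of_sub_comps K_comps DK; subst D.
  rewrite comp_subset // connect_setU1 => Cxa.
  case rx : (reaches_ends s e x) in Cxa *; last first.
    rewrite orbF in Cxa; have E : comp s x = comp s a by apply/eqP; rewrite comp_eqE.
    rewrite comp_setU1 rx E DK /= -E /cu /cv !comp_eqE.
    by move: rx; rewrite /reaches_ends => /norP[-> ->]; rewrite orbT.
  rewrite !comp_setU1 rx reaches_u eqxx /=.
  have: reaches_ends s e a by case/orP: Cxa => [/reaches_ends_connect <-|/andP[]].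
  rewrite reaches_endsE => /orP[] /eqP Ea.
    by have -> : cu \in K by rewrite /cu /u -Ea.
  have -> : cv \in K by rewrite /cv /v -Ea.
  by rewrite orbT.
case/orP => [/andP[/eqP -> cuv_K]|/and3P[YK Yu Yv]].
  split; first exact: comp_in_comps.
  have sub_s' a : reaches_ends s e a -> comp s a \subset comp s' u.
    by move=> ra; rewrite comp_subset // connect_setU1 reaches_u ra orbT.
  by case/orP: cuv_K => cK; [exists cu | exists cv];
     rewrite // sub_s' ?reaches_u ?reaches_v.
have [a Ya] := comp_of_sub_comps K_comps YK; split; last by exists Y.
have ra : reaches_ends s e a = false.
  by apply/negbTE; rewrite reaches_endsE -Ya negb_or Yu Yv.
by apply/compsP; exists a; rewrite comp_setU1 ra.
Qed.

Lemma collides_setU1 :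
  collides K s' = [&& cu \in K, cv \in K & ~~ connect (adj s) u v].
Proof.
apply/collidesP/idP.
  case=> C [D1 [D2 [/compsP[x ->] D1K D2K N /andP[S1 S2]]]].
  have [a1 Da1] := comp_of_sub_comps K_comps D1K.
  have [a2 Da2] := comp_of_sub_comps K_comps D2K; subst D1 D2.
  rewrite !comp_subset // !connect_setU1 in S1 S2.
  case rx : (reaches_ends s e x) in S1 S2; last first.
    rewrite !orbF in S1 S2; case/negP: N.
    by rewrite comp_eqE (connect_trans _ S2) // connect_sym_adj.
  have r_of a : connect (adj s) x a || true && reaches_ends s e a -> reaches_ends s e a.
    by case/orP => [/reaches_ends_connect <-|].
  move: (r_of _ S1) (r_of _ S2); rewrite !reaches_endsE.
  by case/orP => /eqP E1; case/orP => /eqP E2; rewrite E1 E2 in N D1K D2K;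
    rewrite ?eqxx // in N; rewrite D1K D2K /= -comp_eqE // eq_sym.
case/and3P => cuK cvK Nuv; exists (comp s' u), cu, cv; split => //.
- exact: comp_in_comps.
- by rewrite /cu /cv comp_eqE.
by rewrite !comp_subset // connect0 connect_setU1 reaches_u reaches_v orbT.
Qed.

Lemma Se_coarsen : Se ends (s, K) e = coarsen (s, K) s'.
Proof.
rewrite /Se /coarsen /= collides_setU1 -/u -/v -/s' -/cu -/cv.
case: ifP => Cuv.
  rewrite !andbF; congr (Some (_, _)); apply/setP => Y; rewrite mem_coarsen_setU1.
  have cvu : cv = cu by apply/eqP; rewrite comp_eqE connect_sym_adj.
  have cs'u : comp s' u = cu by rewrite comp_setU1 reaches_u -/cu -/cv cvu setUid.
  by rewrite cvu cs'u orbb; case: (eqVneq Y cu) => [->|]; rewrite ?andbT ?andbF ?orbF.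
case cuK : (cu \in K); case cvK : (cv \in K) => //=; congr (Some (_, _));
  apply/setP => Y; rewrite mem_coarsen_setU1 cuK cvK /= ?in_setU ?in_set1 ?in_setD1.
- by case: (Y == comp s' u); case: (Y \in K); case: (Y == cu); case: (Y == cv).
- by case: (Y == comp s' u); case: (Y \in K); case: (Y == cu); case: (Y == cv).
case YK : (Y \in K); rewrite ?andbF //=.
by apply/esym/andP; split; apply/eqP => E; rewrite E ?cuK ?cvK in YK.
Qed.

End CoarsenAddEdge.

Section CoarsenTrans.
Variables (s t t' : {set 'I_m}) (K : {set {set V}}).
Hypotheses (K_comps : K \subset comps s) (st : s \subset t) (tt' : t \subset t').
Let st' : s \subset t' := subset_trans st tt'.

Lemma collides_widen : collides K t -> collides K t'.
Proof.
case/collidesP => C [D1 [D2 [/compsP[b ->] D1K D2K N /andP[S1 S2]]]].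
have Cbb := comp_sub_widen b tt'.
apply/collidesP; exists (comp t' b), D1, D2; split; rewrite ?comp_in_comps //.
by rewrite (subset_trans S1 Cbb) (subset_trans S2 Cbb).
Qed.

Lemma comp_in_coarsen_comps a : comp s a \in K -> comp t a \in coarsen_comps K t.
Proof.
by move=> aK; apply/coarsen_compsP; split; [exact: comp_in_comps | exists (comp s a)];
  rewrite ?comp_sub_widen.
Qed.

Lemma coarsen_comps_trans :
  coarsen_comps (coarsen_comps K t) t' = coarsen_comps K t'.
Proof.
apply/setP => Y; apply/coarsen_compsP/coarsen_compsP => -[Yt' [C CK CY]]; split => //.
  by case/coarsen_compsP: CK => _ [D DK DC]; exists D => //; apply: subset_trans DC CY.
have [a Ca] := comp_of_sub_comps K_comps CK; subst C.
exists (comp t a); first exact: comp_in_coarsen_comps.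
by case/compsP: Yt' CY => b ->; rewrite !comp_subset.
Qed.

Lemma collides_coarsen_comps :
  ~~ collides K t -> collides (coarsen_comps K t) t' = collides K t'.
Proof.
move=> NKt; apply/collidesP/collidesP => -[C [D1 [D2 [Ct' D1K D2K N /andP[S1 S2]]]]].
  case/coarsen_compsP: D1K => /compsP[x1 Dx1] [F1 F1K F1D].
  case/coarsen_compsP: D2K => /compsP[x2 Dx2] [F2 F2K F2D]; subst D1 D2.
  exists C, F1, F2; split; rewrite ?(subset_trans F1D S1) ?(subset_trans F2D S2) //.
  apply: contraNneq N => EF; have [a Fa] := comp_of_sub_comps K_comps F1K.
  have aF : a \in F1 by rewrite Fa mem_comp connect0.
  have aF2 : a \in F2 by rewrite -EF.
  by rewrite (comp_mem (subsetP F1D a aF)) (comp_mem (subsetP F2D a aF2)).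
have [a1 Da1] := comp_of_sub_comps K_comps D1K.
have [a2 Da2] := comp_of_sub_comps K_comps D2K; subst D1 D2.
exists C, (comp t a1), (comp t a2); split; rewrite ?comp_in_coarsen_comps //.
  apply: contraNneq NKt => E; apply/collidesP.
  exists (comp t a1), (comp s a1), (comp s a2); split; rewrite ?comp_in_comps //.
  by rewrite !comp_subset // connect0 -comp_eqE E /=.
by case/compsP: Ct' S1 S2 => b ->; rewrite !comp_subset // => -> ->.
Qed.

Lemma coarsen_trans :
  obind (coarsen^~ t') (coarsen (s, K) t) = coarsen (s, K) t'.
Proof.
rewrite /coarsen /=; case: ifP => [Kt|/negbT NKt] /=.
  by rewrite collides_widen.
by rewrite collides_coarsen_comps // coarsen_comps_trans.
Qed.

End CoarsenTrans.

Lemma card_coarsen_comps (s t : {set 'I_m}) (K : {set {set V}}) :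
  K \subset comps s -> s \subset t -> ~~ collides K t -> #|coarsen_comps K t| = #|K|.
Proof.
move=> K_comps st NKt.
pose saturate (D : {set V}) := [set x | [exists a in D, connect (adj t) a x]].
have saturate_comp a : saturate (comp s a) = comp t a.
  apply/setP => x; rewrite inE mem_comp; apply/exists_inP/idP => [[b]|Cax].
    by rewrite mem_comp => /(connect_adj_sub st) Cab; apply: connect_trans.
  by exists a; rewrite ?mem_comp ?connect0.
have -> : coarsen_comps K t = saturate @: K.
  apply/setP => Y; apply/coarsen_compsP/imsetP.
    case=> /compsP[b ->] [D DK].
    have [a Da] := comp_of_sub_comps K_comps DK; subst D.
    rewrite comp_subset // => Cba; exists (comp s a) => //.
    by rewrite saturate_comp; apply/eqP; rewrite comp_eqE.
  case=> D DK ->; have [a Da] := comp_of_sub_comps K_comps DK; subst D.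
  rewrite saturate_comp; split; first exact: comp_in_comps.
  by exists (comp s a); rewrite ?comp_sub_widen.
apply: card_in_imset => D1 D2 D1K D2K E; apply/eqP; apply: contraNT NKt => N.
have [a1 Da1] := comp_of_sub_comps K_comps D1K.
have [a2 Da2] := comp_of_sub_comps K_comps D2K.
apply/collidesP; exists (saturate D1), D1, D2; split => //.
  by rewrite Da1 saturate_comp comp_in_comps.
by rewrite {2}E Da1 Da2 !saturate_comp !comp_sub_widen.
Qed.

End Components.

Section Differential.
Variables (V : finType) (m : nat) (ends : 'I_m -> V * V).
Local Notation estate := (estate V m).
Local Notation valid := (valid ends).
Local Notation Se := (Se ends).
Local Notation dmx := (dmx ends).
Local Notation st := (@st V m).

Lemma Se_valid (S T : estate) e : valid S -> Se S e = Some T ->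
  [/\ T.1 = e |: S.1, valid T & deg_j T = deg_j S].
Proof.
case: S => s K; rewrite /valid /= => K_comps; rewrite Se_coarsen // /coarsen /=.
case: ifP => // NK [<-]; split; rewrite ?coarsen_comps_sub //.
by rewrite /deg_j /= (card_coarsen_comps K_comps) ?subsetUr ?NK.
Qed.

Lemma Se_Se_coarsen (S : estate) e f : valid S ->
  obind (Se^~ f) (Se S e) = coarsen ends S (f |: (e |: S.1)).
Proof.
case: S => s K; rewrite /valid /= => K_comps; rewrite Se_coarsen //.
rewrite -(coarsen_trans K_comps (subsetUr [set e] s) (subsetUr [set f] _)).
case E: (coarsen _ _ _) => [T|] //=; move: E; rewrite /coarsen; case: ifP => // _ [<-].
by rewrite Se_coarsen ?coarsen_comps_sub.
Qed.

Lemma Se_comm (S : estate) e f : valid S ->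
  obind (Se^~ f) (Se S e) = obind (Se^~ e) (Se S f).
Proof. by move=> vS; rewrite !Se_Se_coarsen // setUCA. Qed.

Lemma sign_e_setU1 (s : {set 'I_m}) f e : f \notin s ->
  sign_e (f |: s) e = (if (val f < val e)%N then -1 else 1) * sign_e s e.
Proof.
move=> fs; rewrite /sign_e; set A := [set g in s | (val g < val e)%N].
have fA : f \notin A by rewrite inE (negbTE fs).
have -> : [set g in f |: s | (val g < val e)%N] = if (val f < val e)%N then f |: A else A.
  apply/setP => g; rewrite !inE; case: (eqVneq g f) => [->|ngf] /=.
    by case: ifP => fe; rewrite ?inE ?eqxx ?fe // (negbTE fs).
  by case: ifP => _; rewrite ?inE ?(negbTE ngf).
by case: ifP => _; rewrite ?mul1r // cardsU1 fA exprD expr1.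
Qed.

Lemma sign_e_swap (s : {set 'I_m}) e f : e \notin s -> f \notin s -> e != f ->
  sign_e s f * sign_e (f |: s) e = - (sign_e s e * sign_e (e |: s) f).
Proof.
move=> es fs nef; rewrite !sign_e_setU1 //.
case: (ltngtP (val f) (val e)) => [||/val_inj efE]; last by rewrite efE eqxx in nef.
- by rewrite mulN1r mul1r mulrN mulrC.
- by rewrite mulN1r mul1r mulrN mulrC opprK.
Qed.

Lemma mul_dmx n (B : 'M[int]_(NS V m, n)) a c : valid (st a) ->
  (dmx *m B) a c = \sum_(e | e \notin (st a).1)
                     sign_e (st a).1 e * oapp (fun T => B (enum_rank T) c) 0 (Se (st a) e).
Proof.
move=> va; rewrite mxE.
under eq_bigr => b _ do rewrite mxE va big_distrl /=.
rewrite exchange_big; apply: eq_bigr => e _.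
case E: (Se (st a) e) => [T|] /=; last by rewrite mulr0 big1 // => b _; rewrite mul0r.
rewrite (bigD1 (enum_rank T)) //= /st enum_rankK eqxx big1 ?addr0 // => b nb.
rewrite (_ : (Some T == _) = false) ?mul0r //.
by apply: contraNF nb => /eqP [->]; rewrite enum_valK.
Qed.

Lemma dmx_mul_dmx : dmx *m dmx = 0.
Proof.
apply/matrixP => a c; rewrite [RHS]mxE.
have [va|nva] := boolP (valid (st a)); last first.
  by rewrite mxE big1 // => b _; rewrite mxE (negbTE nva) mul0r.
set s := (st a).1; rewrite mul_dmx //.
pose F e f := if [&& e \notin s, f \notin s & e != f]
                 && (obind (Se^~ f) (Se (st a) e) == Some (st c))
              then sign_e s e * sign_e (e |: s) f else 0.
transitivity (\sum_e \sum_f F e f); last first.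
  apply: sum_antisym => e f; rewrite /F (Se_comm f e va) eq_sym.
  case: (boolP [&& e \notin s, f \notin s & e != f]) => [/and3P[es fs nef]|nefs] /=.
    by rewrite es fs nef /=; case: ifP => _; rewrite ?oppr0 // sign_e_swap.
  rewrite (_ : [&& _, _ & _] = false) ?oppr0 //.
  by apply: contraNF nefs => /and3P[-> -> ->].
rewrite big_mkcond; apply: eq_bigr => e _ /=.
case: ifP => es; last by rewrite big1 // => f _; rewrite /F es.
case E: (Se (st a) e) => [T|] /=; last by rewrite mulr0 big1 // => f _; rewrite /F E andbF.
have [T1 vT _] := Se_valid va E.
rewrite mxE /st enum_rankK vT T1 mulr_sumr big_mkcond; apply: eq_bigr => f _.
rewrite /F es E in_setU1 negb_or /=.
case: (eqVneq f e) => [->|nfe] /=; first by rewrite andbF.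
by case: (f \in s) => //=; case: ifP; rewrite ?mulr0 ?mulrA.
Qed.

Lemma dmx_neq0 a b : dmx a b != 0 ->
  [/\ valid (st a), valid (st b), deg_i (st b) = (deg_i (st a)).+1
    & deg_j (st b) = deg_j (st a)].
Proof.
rewrite mxE; case: ifP => // va nz.
have [e /andP[es /eqP E]] : exists e, (e \notin (st a).1) && (Se (st a) e == Some (st b)).
  apply/existsP; apply: contraNT nz => /existsPn none.
  by rewrite big1 // => e es; move: (none e); rewrite es /= => /negbTE ->.
have [T1 vT degj] := Se_valid va E.
by split; rewrite // /deg_i T1 cardsU1 es.
Qed.

End Differential.

Section Cohomology.
Variables (V : finType) (m : nat) (ends : 'I_m -> V * V).
Local Notation estate := (estate V m).
Local Notation valid := (valid ends).
Local Notation dQ := (dQ ends).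
Local Notation proj := (proj ends).
Local Notation st := (@st V m).

Lemma deg_i_le (S : estate) : (deg_i S <= m)%N.
Proof. by rewrite -[m in (_ <= m)%N]card_ord max_card. Qed.

Lemma deg_j_le (S : estate) : valid S -> (deg_j S <= #|V|)%N.
Proof.
move=> vS; apply: leq_trans (subset_leq_card vS) _.
by apply: leq_trans (leq_imset_card _ _) _; rewrite cardsT.
Qed.

Lemma dQ_mul_dQ : dQ *m dQ = 0.
Proof. by rewrite /dQ -map_mxM dmx_mul_dmx map_mx0. Qed.

Lemma proj_dQ_sub i j : (proj i j *m dQ <= proj i.+1 j)%MS.
Proof.
apply: diag_mul_submx => a b /andP[/andP[_ /eqP ia] /eqP ja].
rewrite mxE intr_eq0 => /dmx_neq0[_ vb -> ->].
by rewrite vb ia ja !eqxx.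
Qed.

Lemma proj_top_dQ j : proj m j *m dQ = 0.
Proof.
apply/eqP; rewrite -submx0; apply: submx_trans (proj_dQ_sub m j) _.
rewrite submx0; apply/eqP/matrixP => a b; rewrite !mxE.
by rewrite eqn_leq ltnNge deg_i_le !andbF mul0rn.
Qed.

Lemma rank_proj i j : \rank (proj i j) =
  #|[pred a | valid (st a) && (deg_i (st a) == i) && (deg_j (st a) == j)]|.
Proof. by rewrite rank_diag_mx; apply: eq_card => a; rewrite !inE mxE; case: ifP. Qed.

Lemma cohomology_euler_characteristic j :
  \sum_(i < m.+1) (-1) ^+ i * (cohom_rank ends i j)%:R
  = \sum_(i < m.+1) (-1) ^+ i * (\rank (proj i j))%:R :> int.
Proof. exact: euler_characteristic dQ_mul_dQ (proj_dQ_sub ^~ j) (proj_top_dQ j). Qed.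

Lemma chrom_poly_comp1X : chrom_poly ends \Po (1 + 'X) =
  \sum_(S : estate | valid S) ((-1) ^+ deg_i S : int) *: 'X ^+ deg_j S.
Proof.
rewrite /chrom_poly raddf_sum /=.
under eq_bigr => s _ do
  rewrite comp_polyZ rmorphXn /= comp_polyX /ncomp expr1D_subsets scaler_sumr.
by rewrite pair_big_dep.
Qed.

End Cohomology.

(* H^i(G) = 0 for i > |E| = m, so the sum over i >= 0 is the sum over i <= m. *)
Theorem mainTheorem2 (V : finType) (m : nat) (ends : 'I_m -> V * V) :
  \sum_(i < m.+1) ((-1) ^+ i) *: qdimH ends i = chrom_poly ends \Po (1 + 'X).
Proof.
rewrite chrom_poly_comp1X /qdimH.
under eq_bigr => i _ do rewrite scaler_sumr.
under eq_bigr => i _ do under eq_bigr => j _ do rewrite scalerA.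
rewrite exchange_big /=.
under eq_bigr => j _ do rewrite -scaler_suml cohomology_euler_characteristic scaler_suml.
under eq_bigr => j _ do under eq_bigr => i _ do rewrite rank_proj mulr_natr -scalerMnl.
rewrite exchange_big /=.
rewrite (sum_card_bigraded (fun i j => ((-1) ^+ i : int) *: ('X ^+ j : {poly int})))
  => [|a _|a]; [|exact: deg_i_le|exact: deg_j_le].
by rewrite [RHS](reindex (@st V m)) //; apply: onW_bij (enum_val_bij _).
Qed.
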